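(* Let $h(p):=-s_\phi(p,p)$, $C:=\mathbb{E}[Q\mid S]$, and let $S_B$ be a binned version of $S$. Then $$\underbrace{\mathbb{E}[\mathrm{Var}_h(Q\mid S_B)]}_{\mathrm{GL}(S_B)}=\underbrace{\mathbb{E}[\mathrm{Var}_h(Q\mid S)]}_{\mathrm{GL}(S)}+\underbrace{\mathbb{E}[\mathrm{Var}_h(C\mid S_B)]}_{\mathrm{GL}_{\mathrm{induced}}(S,S_B)}.$$ Moreover, if the scoring rule $\phi$ is proper, then $\mathrm{GL}_{\mathrm{induced}}(S,S_B)\ge0$.
   Context: Let $(X,Y)$ be jointly distributed with $X\in\mathcal{X}$ and $Y\in\{e_1,\dots,e_K\}$ (one-hot vectors of $\mathbb{R}^K$); $\Delta_K$ is the probability simplex; $Q\in\Delta_K$ with $Q_k:=P(Y=e_k\mid X)$; $S=f(X)\in\Delta_K$ for a classifier $f$. A scoring rule is $\phi:\Delta_K\times\{e_1,\dots,e_K\}\to\mathbb{R}$, with $s_\phi(P,q):=\sum_k\phi(P,e_k)q_k$ and $d_\phi(P,q):=s_\phi(P,q)-s_\phi(q,q)$; $\phi$ is proper if $d_\phi\ge0$. For $f:\mathbb{R}^d\to\mathbb{R}$, $\mathrm{Var}_f(U\mid V):=\mathbb{E}[f(U)\mid V]-f(\mathbb{E}[U\mid V])$. Binned classifier: given a partition $\{\mathcal{B}_j\}_{1\le j\le J}$ of $\Delta_K$, $S_B$ is the random variable equal to $\mathbb{E}[S\mid S\in\mathcal{B}_j]$ on the event $\{S\in\mathcal{B}_j\}$.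 All required expectations are assumed to exist. *)

From HB Require Import structures.
From mathcomp Require Import all_boot all_order all_algebra.
From mathcomp Require Import all_classical all_reals all_analysis.
Set Implicit Arguments. Unset Strict Implicit. Unset Printing Implicit Defensive.
Import Order.TTheory GRing.Theory Num.Theory.
Import numFieldNormedType.Exports.
Local Open Scope classical_set_scope.
Local Open Scope ring_scope.

Section Defs.
Variable R : realType.

Definition simplex (K : nat) : set ('I_K -> R) :=
  [set p | (forall k, 0 <= p k) /\ \sum_(k < K) p k = 1].
Arguments simplex : clear implicits.

(* Borel sigma-algebra of R^K : generated by the coordinate projections
   (= product Borel sigma-algebra = Borel sets of R^K). *)
Definition borelK (K : nat) : set (set ('I_K -> R)) :=
  <<s [set (fun p : 'I_K -> R => p k) @^-1` A | k in [set: 'I_K] & A in (@measurable _ R)] >>.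
Arguments borelK : clear implicits.

Definition sigma_rv {d'} {T : Type} {U : measurableType d'} (Z : T -> U)
  : set (set T) := [set Z @^-1` A | A in (@measurable _ U)].
Definition sigma_rvK {T : Type} {K : nat} (Z : T -> 'I_K -> R)
  : set (set T) := [set Z @^-1` A | A in borelK K].

(* Scoring rule phi : Delta_K x {e_1..e_K} -> R; phi P k stands for phi(P, e_k). *)
Definition s_phi (K : nat) (phi : ('I_K -> R) -> 'I_K -> R) (P q : 'I_K -> R) : R :=
  \sum_(k < K) phi P k * q k.
Definition d_phi (K : nat) (phi : ('I_K -> R) -> 'I_K -> R) (P q : 'I_K -> R) : R :=
  s_phi phi P q - s_phi phi q q.
Definition proper_scoring (K : nat) (phi : ('I_K -> R) -> 'I_K -> R) : Prop :=
  forall P q, simplex K P -> simplex K q -> 0 <= d_phi phi P q.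
Definition hphi (K : nat) (phi : ('I_K -> R) -> 'I_K -> R) (p : 'I_K -> R) : R :=
  - s_phi phi p p.

Variables (d : measure_display) (T : measurableType d).

Definition is_cexp (P : probability T R) (G : set (set T)) (U V : T -> R) : Prop :=
  [/\ P.-integrable setT (EFin \o U), P.-integrable setT (EFin \o V),
      (forall B : set R, measurable B -> G (V @^-1` B)) &
      (forall A, G A -> (\int[P]_(t in A) (U t)%:E = \int[P]_(t in A) (V t)%:E)%E)].

Definition is_cexpK (K : nat) (P : probability T R) (G : set (set T))
  (U V : T -> 'I_K -> R) : Prop :=
  forall k, is_cexp P G (fun t => U t k) (fun t => V t k).

(* Binned classifier: S_B = E[S | S in B_j] on the event {S in B_j}. *)
Definition bin_mean (K J : nat) (P : probability T R) (S : T -> 'I_K -> R)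
  (B : 'I_J -> set ('I_K -> R)) (j : 'I_J) (k : 'I_K) : R :=
  fine (\int[P]_(t in S @^-1` B j) (S t k)%:E) / fine (P (S @^-1` B j)).
Definition binned (K J : nat) (P : probability T R) (S : T -> 'I_K -> R)
  (B : 'I_J -> set ('I_K -> R)) : T -> 'I_K -> R :=
  fun t k => \sum_(j < J) \1_(S @^-1` B j) t * bin_mean P S B j k.

End Defs.
Arguments simplex {R} K.
Arguments borelK {R} K.

From HB Require Import structures.
From mathcomp Require Import all_boot all_order all_algebra.
From mathcomp Require Import all_classical all_reals all_analysis.
From mathcomp Require Import measurable_realfun.
Import Order.TTheory GRing.Theory Num.Theory.
Import numFieldNormedType.Exports.
Local Open Scope classical_set_scope.
Local Open Scope ring_scope.

(* Taking expectations and using the tower property, the three generalization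
   losses become E h(Q) - E h(E[Q|S_B]), E h(Q) - E h(C) and
   E h(C) - E h(E[C|S_B]); since sigma(S_B) is contained in sigma(S),
   E[Q|S_B] = E[C|S_B] almost surely, which gives the identity.
   For a proper phi, h(q) = -s(q,q) >= -s(p,q) for every p, i.e. h is a
   supremum of linear functions.  As S_B takes finitely many values, sigma(S_B)
   is generated by finitely many atoms; on each atom E[C|S_B] is the mean m of
   C, and integrating h(C) >= -s(m,C) over the atom yields the conditional
   Jensen inequality E h(E[C|S_B]) <= E h(C), i.e. GL_induced >= 0. *)

Definition measurable_wrt {d : measure_display} {T : measurableType d}
    {R : realType} (G : set (set T)) (V : T -> R) :=
  forall B : set R, measurable B -> G (V @^-1` B).

Lemma sigma_algebra_setT {T : Type} {G : set (set T)} :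
  sigma_algebra setT G -> G setT.
Proof. by case=> G0 GD _; rewrite -(setD0 setT); exact: GD G0. Qed.

Section measurable_wrt.
Context {d : measure_display} {T : measurableType d} {R : realType}.
Context {G : set (set T)} (sigmaG : sigma_algebra setT G).

Lemma measurable_wrtP (V : T -> R) :
  measurable_wrt G V <-> measurable_fun setT (V : g_sigma_algebraType G -> R).
Proof.
split=> [GV _ A mA | mV A mA]; first by rewrite setTI; apply: sub_gen_smallest; exact: GV.
by have := mV measurableT A mA; rewrite setTI /measurable /= sigma_algebra_id.
Qed.

Lemma measurable_wrtB {V W : T -> R} :
  measurable_wrt G V -> measurable_wrt G W -> measurable_wrt G (fun t => V t - W t).
Proof.
by move=> /measurable_wrtP mV /measurable_wrtP mW; exact/measurable_wrtP/measurable_funB.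
Qed.

Lemma measurable_wrt_sum (I : finType) (V : I -> T -> R) :
  (forall i, measurable_wrt G (V i)) -> measurable_wrt G (fun t => \sum_i V i t).
Proof.
move=> GV; apply/measurable_wrtP.
by apply: (@measurable_sum _ (g_sigma_algebraType G)) => i; exact/measurable_wrtP.
Qed.

Lemma measurable_wrt_cst (c : R) : measurable_wrt G (fun=> c).
Proof. exact/measurable_wrtP/measurable_cst. Qed.

Lemma measurable_wrt_eq (V : T -> R) s t :
  measurable_wrt G V -> (forall A, G A -> A s -> A t) -> V s = V t.
Proof. by move=> GV /(_ _ (GV _ (measurable_set1 (V s))) erefl). Qed.

End measurable_wrt.

Section conditional_expectation.
Context {d : measure_display} {T : measurableType d} {R : realType}.
Context {P : probability T R} {G : set (set T)}.
Hypothesis sigmaG : sigma_algebra setT G.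
Hypothesis G_measurable : G `<=` measurable.

Lemma integral_ge0_ae {V : T -> R} :
  measurable_wrt G V -> P.-integrable setT (EFin \o V) ->
  (forall A, G A -> (0 <= \int[P]_(t in A) (V t)%:E)%E) ->
  {ae P, forall t, 0 <= V t}.
Proof.
move=> GV iV intV_ge0; set A := V @^-1` `]-oo, 0[.
have GA : G A by apply: GV; exact: measurable_itv.
have mA := G_measurable _ GA.
have iA : P.-integrable A (EFin \o V) by exact: integrableS iV.
have mV : measurable_fun A (EFin \o V) by case/integrableP: iA.
have V_eq : (\int[P]_(t in A) (V t)%:E = - \int[P]_(t in A) `|(V t)%:E|)%E.
  rewrite -integral_ge0N //; apply: eq_integral => t /set_mem.
  by rewrite /A /= in_itv /= => /ltr0_norm ->; rewrite opprK.
have absV0 : (\int[P]_(t in A) `|(V t)%:E| = 0)%E.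
  by apply/eqP; rewrite eq_le integral_ge0 // andbT -oppe_ge0 -V_eq intV_ge0.
apply: filterS _ ((ae_eq_integral_abs P mA mV).1 absV0) => t V0.
rewrite leNgt; apply/negP => Vt_lt0.
by have [V0t] := V0 Vt_lt0; rewrite V0t ltxx in Vt_lt0.
Qed.

Lemma integral_eq_ae_le {V W : T -> R} :
  measurable_wrt G V -> measurable_wrt G W ->
  P.-integrable setT (EFin \o V) -> P.-integrable setT (EFin \o W) ->
  (forall A, G A -> (\int[P]_(t in A) (V t)%:E = \int[P]_(t in A) (W t)%:E)%E) ->
  {ae P, forall t, W t <= V t}.
Proof.
move=> GV GW iV iW eqVW.
have iVW : P.-integrable setT (EFin \o (fun t => V t - W t)).
  exact: (integrableB measurableT iV iW).
suff VW_ge0 : {ae P, forall t, 0 <= V t - W t}.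
  by apply: filterS _ VW_ge0 => t; rewrite subr_ge0.
apply: integral_ge0_ae (measurable_wrtB sigmaG GV GW) iVW _ => A GA.
have mA := G_measurable _ GA.
have iWA : P.-integrable A (EFin \o W) by exact: integrableS iW.
rewrite [X in (_ <= X)%E](_ : _ = \int[P]_(t in A) ((V t)%:E - (W t)%:E))%E //.
rewrite integralB_EFin ?eqVW ?subee ?(integrable_fin_num mA iWA) //.
exact: integrableS iV.
Qed.

Lemma integral_eq_ae {V W : T -> R} :
  measurable_wrt G V -> measurable_wrt G W ->
  P.-integrable setT (EFin \o V) -> P.-integrable setT (EFin \o W) ->
  (forall A, G A -> (\int[P]_(t in A) (V t)%:E = \int[P]_(t in A) (W t)%:E)%E) ->
  {ae P, forall t, V t = W t}.
Proof.
move=> GV GW iV iW eqVW.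
apply: filterS2 (integral_eq_ae_le GV GW iV iW eqVW)
  (integral_eq_ae_le GW GV iW iV (fun A GA => esym (eqVW A GA))) => t WV VW.
by apply/eqP; rewrite eq_le VW WV.
Qed.

Lemma is_cexp_integral {U V : T -> R} : is_cexp P G U V ->
  (\int[P]_t (U t)%:E = \int[P]_t (V t)%:E)%E.
Proof. by case=> _ _ _ -> //; exact: sigma_algebra_setT sigmaG. Qed.

Lemma integralB_cexp {U V W : T -> R} :
  is_cexp P G U V -> P.-integrable setT (EFin \o W) ->
  (\int[P]_t (V t - W t)%:E = \int[P]_t (U t)%:E - \int[P]_t (W t)%:E)%E.
Proof.
move=> cUV iW; have [_ iV _ _] := cUV.
by under eq_integral do rewrite EFinB; rewrite integralB_EFin // (is_cexp_integral cUV).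
Qed.

Lemma is_cexp_unique {U V W : T -> R} :
  is_cexp P G U V -> is_cexp P G U W -> {ae P, forall t, V t = W t}.
Proof.
move=> [_ iV GV eUV] [_ iW GW eUW].
by apply: integral_eq_ae => // A GA; rewrite -eUV -?eUW.
Qed.

Lemma is_cexpK_unique {K} {U V W : T -> 'I_K -> R} :
  is_cexpK P G U V -> is_cexpK P G U W -> {ae P, forall t, V t = W t}.
Proof.
move=> cUV cUW.
apply: filterS _ (filter_forall _ (fun k => is_cexp_unique (cUV k) (cUW k))) => t VW.
exact/funext.
Qed.

Lemma is_cexp_ge0 {U V : T -> R} :
  (forall t, 0 <= U t) -> is_cexp P G U V -> {ae P, forall t, 0 <= V t}.
Proof.
move=> U_ge0 [_ iV GV eUV]; apply: integral_ge0_ae => // A GA.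
by rewrite -eUV //; apply: integral_ge0 => t _; rewrite lee_fin.
Qed.

Lemma is_cexp_sum {I : finType} {U V : I -> T -> R} :
  (forall i, is_cexp P G (U i) (V i)) ->
  is_cexp P G (fun t => \sum_i U i t) (fun t => \sum_i V i t).
Proof.
move=> cUV; have iSum (W : I -> T -> R) A : measurable A ->
    (forall i, P.-integrable setT (EFin \o W i)) ->
    P.-integrable A (EFin \o (fun t => \sum_i W i t)).
  move=> mA iW; rewrite (_ : _ \o _ = fun t => \sum_i (W i t)%:E)%E.
    by apply: integrable_sum => // i _; exact: integrableS (iW i).
  by apply/funext => t /=; rewrite sumEFin.
split.
- by apply: iSum => // i; case: (cUV i).
- by apply: iSum => // i; case: (cUV i).
- by apply: (measurable_wrt_sum sigmaG) => i; case: (cUV i).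
move=> A GA; have mA := G_measurable _ GA.
under eq_integral do rewrite -sumEFin.
under [RHS]eq_integral do rewrite -sumEFin.
rewrite !integral_sum //.
- by apply: eq_bigr => i _; case: (cUV i) => _ _ _ ->.
- by move=> i; case: (cUV i) => _ iV _ _; exact: integrableS iV.
- by move=> i; case: (cUV i) => iU _ _ _; exact: integrableS iU.
Qed.

Lemma is_cexp_cst (c : R) : is_cexp P G (fun=> c) (fun=> c).
Proof.
split=> //; first exact: finite_measure_integrable_cst.
- exact: finite_measure_integrable_cst.
- exact: measurable_wrt_cst.
Qed.

Lemma is_cexpK_simplex {K} {U V : T -> 'I_K -> R} :
  (forall t, simplex K (U t)) -> is_cexpK P G U V ->
  {ae P, forall t, simplex K (V t)}.
Proof.
move=> U_simplex cUV.
have V_ge0 : {ae P, forall t k, 0 <= V t k}.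
  by apply: filter_forall => k; exact: is_cexp_ge0 (fun t => (U_simplex t).1 k) (cUV k).
have V_sum1 : {ae P, forall t, \sum_k V t k = 1}.
  apply: is_cexp_unique (is_cexp_sum (U := fun k t => U t k) cUV) _.
  rewrite (_ : (fun t => _) = fun=> 1); first exact: is_cexp_cst.
  by apply/funext => t; exact: (U_simplex t).2.
by apply: filterS2 V_ge0 V_sum1 => t.
Qed.
End conditional_expectation.

Lemma is_cexpK_tower {d : measure_display} {T : measurableType d} {R : realType}
    {P : probability T R} {G G' : set (set T)} {K} {U V W : T -> 'I_K -> R} :
  G' `<=` G -> is_cexpK P G U V -> is_cexpK P G' V W -> is_cexpK P G' U W.
Proof.
move=> G'G cUV cVW k; have [iU _ _ eUV] := cUV k; have [_ iW GW eVW] := cVW k.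
by split=> // A G'A; rewrite eUV ?eVW //; exact: G'G.
Qed.

Lemma proper_hphi_ge {R : realType} {K : nat} {phi : ('I_K -> R) -> 'I_K -> R} {p q} :
  proper_scoring phi -> simplex K p -> simplex K q ->
  - s_phi phi p q <= hphi phi q.
Proof.
by move=> phi_proper Sp Sq; have := phi_proper _ _ Sp Sq; rewrite subr_ge0 lerN2.
Qed.

Section mean_on_event.
Context {d : measure_display} {T : measurableType d} {R : realType}.
Context {P : probability T R} {K : nat} {D : set T} {U : T -> 'I_K -> R}.
Hypothesis mD : measurable D.
Hypothesis iU : forall k, P.-integrable D (EFin \o (fun t => U t k)).

Let PDE : P D = (fine (P D))%:E.
Proof. by rewrite fineK // fin_num_measure. Qed.

Lemma integrable_s_phi (phi : ('I_K -> R) -> 'I_K -> R) p :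
  P.-integrable D (EFin \o (fun t => s_phi phi p (U t))).
Proof.
rewrite (_ : _ \o _ = fun t => \sum_k (phi p k)%:E * (U t k)%:E)%E.
  by apply: integrable_sum => // k _; exact: (integrableZl mD (phi p k) (iU k)).
by apply/funext => t /=; under eq_bigr do rewrite -EFinM; rewrite sumEFin.
Qed.

Context {m : 'I_K -> R}.
Hypothesis U_mean : forall k, (\int[P]_(t in D) (U t k)%:E = (m k)%:E * P D)%E.

Lemma integral_s_phi (phi : ('I_K -> R) -> 'I_K -> R) p :
  (\int[P]_(t in D) (s_phi phi p (U t))%:E = (s_phi phi p m)%:E * P D)%E.
Proof.
under eq_integral do rewrite /s_phi -sumEFin.
rewrite integral_sum //; last by move=> k; exact: (integrableZl mD (phi p k) (iU k)).
transitivity (\sum_k (phi p k)%:E * ((m k)%:E * P D))%E.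
  by apply: eq_bigr => k _; rewrite -U_mean -integralZl //; exact: iU.
rewrite PDE; under eq_bigr do rewrite -!EFinM.
by rewrite sumEFin -EFinM /s_phi mulr_suml; under eq_bigr do rewrite mulrA.
Qed.

Lemma simplex_mean : (0 < P D)%E -> (forall t, D t -> simplex K (U t)) -> simplex K m.
Proof.
move=> PD_gt0 U_simplex; have fPD_gt0 : 0 < fine (P D) by rewrite -lte_fin -PDE.
split=> [k|].
  have : (0 <= (m k)%:E * P D)%E.
    rewrite -U_mean; apply: integral_ge0 => t Dt.
    by rewrite lee_fin; exact: (U_simplex t Dt).1.
  by rewrite PDE -EFinM lee_fin pmulr_lge0.
apply: (mulIf (lt0r_neq0 fPD_gt0)); apply: EFin_inj; rewrite mul1r mulr_suml -sumEFin.
under eq_bigr do rewrite EFinM -PDE -U_mean.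
rewrite -integral_sum // -PDE -[P D]mul1e -integral_cst //.
by apply: eq_integral => t /set_mem Dt; rewrite sumEFin (U_simplex t Dt).2.
Qed.

End mean_on_event.

Lemma le_integral_hphi_mean {d : measure_display} {T : measurableType d}
    {R : realType} (P : probability T R) {K : nat}
    (phi : ('I_K -> R) -> 'I_K -> R) (D : set T) (U : T -> 'I_K -> R)
    (m : 'I_K -> R) :
  proper_scoring phi -> measurable D ->
  (forall k, P.-integrable D (EFin \o (fun t => U t k))) ->
  P.-integrable D (EFin \o (fun t => hphi phi (U t))) ->
  {ae P, forall t, D t -> simplex K (U t)} ->
  (forall k, (\int[P]_(t in D) (U t k)%:E = (m k)%:E * P D)%E) ->
  ((hphi phi m)%:E * P D <= \int[P]_(t in D) (hphi phi (U t))%:E)%E.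
Proof.
move=> phi_proper mD iU ihU [N [mN PN0 N_bad]] U_mean.
have mDN : measurable (D `\` N) by exact: measurableD.
have iUN k : P.-integrable (D `\` N) (EFin \o (fun t => U t k)).
  exact: integrableS (iU k).
have integral_DN f : P.-integrable D f ->
    (\int[P]_(t in D) f t = \int[P]_(t in D `\` N) f t)%E.
  by move=> iF; exact: negligible_integral.
have PDN : P D = P (D `\` N).
  rewrite -[P D]mul1e -[P (D `\` N)]mul1e -!integral_cst // integral_DN //.
  exact: finite_measure_integrable_cst.
have U_meanN k : (\int[P]_(t in D `\` N) (U t k)%:E = (m k)%:E * P (D `\` N))%E.
  by rewrite -PDN -U_mean integral_DN //; exact: iU.
have U_simplexN t : (D `\` N) t -> simplex K (U t).
  by move=> [Dt Nt]; apply: contrapT => nSt; apply/Nt/N_bad => /(_ Dt).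
rewrite PDN integral_DN //.
have := measure_ge0 P (D `\` N); rewrite le_eqVlt => /orP[/eqP PDN0|PDN_gt0].
  rewrite -PDN0 mule0 null_set_integral //.
  by case/integrableP: (integrableS mD mDN (@subDsetl _ _ _) ihU).
have m_simplex := simplex_mean mDN iUN U_meanN PDN_gt0 U_simplexN.
have -> : ((hphi phi m)%:E * P (D `\` N) =
    \int[P]_(t in D `\` N) (- s_phi phi m (U t))%:E)%E.
  under eq_integral do rewrite EFinN -mulN1e.
  rewrite integralZl //; last exact: integrable_s_phi.
  by rewrite (integral_s_phi mDN iUN U_meanN) mulN1e /hphi EFinN mulNe.
apply: le_integral => //.
- exact: integrableN (integrable_s_phi mDN iUN phi m).
- exact: integrableS ihU.
move=> t /set_mem DNt; rewrite lee_fin.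
exact: proper_hphi_ge phi_proper m_simplex (U_simplexN t DNt).
Qed.

Definition atom_of {T : Type} (G : set (set T)) (A : set T) :=
  G A /\ forall x y B, A x -> A y -> G B -> B x -> B y.

Section conditional_jensen.
Context {d : measure_display} {T : measurableType d} {R : realType}.
Context {P : probability T R} {G : set (set T)} {K : nat}.
Hypothesis G_measurable : G `<=` measurable.
Context {phi : ('I_K -> R) -> 'I_K -> R} {U V : T -> 'I_K -> R}.
Hypothesis phi_proper : proper_scoring phi.
Hypothesis U_simplex : {ae P, forall t, simplex K (U t)}.
Hypothesis cUV : is_cexpK P G U V.
Hypothesis ihU : P.-integrable setT (EFin \o (fun t => hphi phi (U t))).
Hypothesis ihV : P.-integrable setT (EFin \o (fun t => hphi phi (V t))).

Lemma le_integral_hphi_atom A : atom_of G A ->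
  (\int[P]_(t in A) (hphi phi (V t))%:E <= \int[P]_(t in A) (hphi phi (U t))%:E)%E.
Proof.
move=> [GA A_atom]; have mA := G_measurable _ GA.
have [->|/set0P[t0 At0]] := eqVneq A set0; first by rewrite !integral_set0.
have V_const t : A t -> V t = V t0.
  move=> At; apply/funext => k; case: (cUV k) => _ _ GVk _.
  by apply: measurable_wrt_eq GVk _ => B GB; exact: A_atom.
rewrite (eq_integral (cst (hphi phi (V t0))%:E)); last first.
  by move=> t /set_mem At; rewrite /= V_const.
rewrite integral_cst //; apply: le_integral_hphi_mean => //.
- by move=> k; case: (cUV k) => iU _ _ _; exact: integrableS iU.
- exact: integrableS ihU.
- by apply: filterS _ U_simplex => t.
move=> k; case: (cUV k) => _ _ _ ->//.
rewrite (eq_integral (cst (V t0 k)%:E)) ?integral_cst //.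
by move=> t /set_mem At; rewrite /= V_const.
Qed.

Lemma le_integral_hphi_cexpK {I : eqType} {s : seq I} {E : I -> set T} :
  uniq s -> trivIset [set` s] E -> \big[setU/set0]_(i <- s) E i = setT ->
  (forall i, atom_of G (E i)) ->
  (\int[P]_t (hphi phi (V t))%:E <= \int[P]_t (hphi phi (U t))%:E)%E.
Proof.
move=> s_uniq E_triv E_cover E_atom.
have mE i : measurable (E i) by exact: G_measurable (E_atom i).1.
rewrite -E_cover !integral_bigsetU_EFin //.
- by apply: lee_sum => i _; exact: le_integral_hphi_atom.
- by rewrite E_cover; case/integrableP: ihU.
- by rewrite E_cover; case/integrableP: ihV.
Qed.

End conditional_jensen.

Section random_vector.
Context {R : realType} {K : nat}.

Lemma borelK_set1 (v : 'I_K -> R) : borelK K [set v].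
Proof.
have -> : [set v] = \bigcap_(k in [set: 'I_K]) (fun p => p k) @^-1` [set v k].
  apply/seteqP; split=> [p -> k _ //|p pv]; apply/funext => k; exact: pv.
apply: (@fin_bigcap_measurable _ (g_sigma_algebraType _)) => [|k _].
  exact: finite_finset.
apply: sub_gen_smallest; exists k => //.
by exists [set v k] => //; exact: measurable_set1.
Qed.

Context {d : measure_display} {T : measurableType d}.

Lemma sigma_algebra_sigma_rvK (Z : T -> 'I_K -> R) : sigma_algebra setT (sigma_rvK Z).
Proof.
have borelK_sigma : sigma_algebra setT (@borelK R K) := smallest_sigma_algebra _ _.
have := sigma_algebra_preimage setT Z borelK_sigma.
by congr sigma_algebra; apply/seteqP; split=> _ [A BA <-]; exists A => //; rewrite setTI.
Qed.

Lemma sigma_rvK_measurable (Z : T -> 'I_K -> R) :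
  (forall A, borelK K A -> measurable (Z @^-1` A)) -> sigma_rvK Z `<=` measurable.
Proof. by move=> mZ _ [A BA <-]; exact: mZ. Qed.

Lemma atom_of_sigma_rvK (Z : T -> 'I_K -> R) v :
  atom_of (sigma_rvK Z) (Z @^-1` [set v]).
Proof.
split=> [|x y _ /= Zx Zy [A _ <-]]; first by exists [set v] => //; exact: borelK_set1.
by rewrite /= Zx Zy.
Qed.

End random_vector.

Section binned.
Context {d : measure_display} {T : measurableType d} {R : realType}.
Context (P : probability T R) {K J : nat}.
Context {S : T -> 'I_K -> R} {B : 'I_J -> set ('I_K -> R)}.
Hypothesis B_disj : forall i j, i != j -> B i `&` B j = set0.

Lemma binnedE {t j} : B j (S t) -> binned P S B t = bin_mean P S B j.
Proof.
move=> Bj; apply/funext => k; rewrite /binned (bigD1 j) //= big1 => [|i ij].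
  by rewrite indicE mem_set // mul1r addr0.
rewrite indicE memNset ?mul0r // => Bi.
by have := B_disj _ _ ij; rewrite -subset0 => /(_ (S t) (conj Bi Bj)).
Qed.

Hypothesis B_cover : forall t, exists j, B j (S t).
Hypothesis B_borel : forall j, borelK K (B j).

Lemma sigma_rvK_binned : sigma_rvK (binned P S B) `<=` sigma_rvK S.
Proof.
move=> _ [A BA <-]; exists (\bigcup_(j in [set j | A (bin_mean P S B j)]) B j).
  apply: (@fin_bigcup_measurable _ (g_sigma_algebraType _)) => [|j _].
    exact: finite_finset.
  exact: B_borel.
apply/seteqP; split=> t /=; first by case=> j Aj Bj; rewrite (binnedE Bj).
by have [j Bj] := B_cover t; rewrite (binnedE Bj) => Aj; exists j.
Qed.

Lemma le_integral_hphi_binned {phi : ('I_K -> R) -> 'I_K -> R}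
    {U V : T -> 'I_K -> R} :
  sigma_rvK S `<=` measurable -> proper_scoring phi ->
  {ae P, forall t, simplex K (U t)} -> is_cexpK P (sigma_rvK (binned P S B)) U V ->
  P.-integrable setT (EFin \o (fun t => hphi phi (U t))) ->
  P.-integrable setT (EFin \o (fun t => hphi phi (V t))) ->
  (\int[P]_t (hphi phi (V t))%:E <= \int[P]_t (hphi phi (U t))%:E)%E.
Proof.
move=> S_meas phi_proper U_simplex cUV ihU ihV.
have SB_meas A : sigma_rvK (binned P S B) A -> measurable A.
  by move=> /sigma_rvK_binned; exact: S_meas.
(* level sets of the binned classifier, indexed by the bin means as finite
   functions, which have a decidable equality *)
pose means := undup [seq [ffun k => bin_mean P S B j k] | j <- enum 'I_J].
apply: (le_integral_hphi_cexpK SB_meas phi_proper U_simplex cUV ihU ihV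
  (s := means) (E := fun v => binned P S B @^-1` [set fun_of_fin v])).
- exact: undup_uniq.
- by move=> v w _ _ [t [/= Ev Ew]]; apply/ffunP => k; rewrite -Ev Ew.
- apply/seteqP; split=> // t _; rewrite -bigcup_seq.
  have [j Bj] := B_cover t; exists [ffun k => bin_mean P S B j k].
    by rewrite /= mem_undup; apply: map_f; rewrite mem_enum.
  by apply/funext => k; rewrite /= ffunE (binnedE Bj).
- by move=> v; exact: atom_of_sigma_rvK.
Qed.

End binned.

Theorem proposition1
  (R : realType) (d : measure_display) (T : measurableType d)
  (P : probability T R)
  (dX : measure_display) (Xsp : measurableType dX) (K J : nat)
  (X : T -> Xsp) (Y : T -> 'I_K)
  (f : Xsp -> 'I_K -> R)
  (phi : ('I_K -> R) -> 'I_K -> R)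
  (B : 'I_J -> set ('I_K -> R))
  (Q C mQB mCB : T -> 'I_K -> R)
  (HQB HQS HCB : T -> R) :
  (* the data *)
  measurable_fun setT X ->
  (forall k, measurable (Y @^-1` [set k])) ->
  (forall x, simplex K (f x)) ->
  (forall A, borelK K A -> measurable (f @^-1` A)) ->
  (* Q_k = P(Y = e_k | X), Q in Delta_K *)
  (forall t, simplex K (Q t)) ->
  is_cexpK P (sigma_rv X) (fun t k => (Y t == k)%:R) Q ->
  (* {B_j} is a (Borel) partition of Delta_K *)
  (forall j, borelK K (B j)) ->
  (forall j, B j `<=` simplex K) ->
  (forall i j, i != j -> B i `&` B j = set0) ->
  (forall p, simplex K p -> exists j, B j p) ->
  let S := fun t => f (X t) in
  let SB := binned P S B in
  let h := hphi phi in
  (* C = E[Q | S] *)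
  is_cexpK P (sigma_rvK S) Q C ->
  (* the conditional expectations appearing in Var_h(.|.) *)
  is_cexp P (sigma_rvK SB) (fun t => h (Q t)) HQB ->
  is_cexpK P (sigma_rvK SB) Q mQB ->
  is_cexp P (sigma_rvK S) (fun t => h (Q t)) HQS ->
  is_cexp P (sigma_rvK SB) (fun t => h (C t)) HCB ->
  is_cexpK P (sigma_rvK SB) C mCB ->
  (* the remaining required expectations exist *)
  P.-integrable setT (EFin \o (fun t => h (mQB t))) ->
  P.-integrable setT (EFin \o (fun t => h (C t))) ->
  P.-integrable setT (EFin \o (fun t => h (mCB t))) ->
  (\int[P]_t (HQB t - h (mQB t))%:E
     = \int[P]_t (HQS t - h (C t))%:E + \int[P]_t (HCB t - h (mCB t))%:E)%E
  /\ (proper_scoring phi -> (0 <= \int[P]_t (HCB t - h (mCB t))%:E)%E).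
Proof.
move=> mX _ f_simplex mf Q_simplex _ B_borel _ B_disj B_simplex S SB h
  cQC cHQB cQmQB cHQS cHCB cCmCB ihmQB ihC ihmCB.
have B_cover t : exists j, B j (S t) := B_simplex _ (f_simplex (X t)).
have S_meas : sigma_rvK S `<=` measurable.
  apply: sigma_rvK_measurable => A BA; rewrite -[_ @^-1` _]setTI.
  exact: (mX measurableT _ (mf A BA)).
have SB_S : sigma_rvK SB `<=` sigma_rvK S := sigma_rvK_binned P B_disj B_cover B_borel.
have SB_meas A : sigma_rvK SB A -> measurable A by move/SB_S; exact: S_meas.
have sigmaS := sigma_algebra_sigma_rvK S.
have sigmaSB := sigma_algebra_sigma_rvK SB.
have mQB_mCB := is_cexpK_unique sigmaSB SB_meas cQmQB (is_cexpK_tower SB_S cQC cCmCB).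
have h_mQB_mCB : (\int[P]_t (h (mQB t))%:E = \int[P]_t (h (mCB t))%:E)%E.
  apply: ae_eq_integral => //; [by case/integrableP: ihmQB|by case/integrableP: ihmCB|].
  by apply: filterS _ mQB_mCB => t /= ->.
rewrite (integralB_cexp sigmaSB cHQB ihmQB) (integralB_cexp sigmaS cHQS ihC).
rewrite (integralB_cexp sigmaSB cHCB ihmCB) h_mQB_mCB.
split; first by rewrite addeA subeK // (integrable_fin_num measurableT ihC).
move=> phi_proper; rewrite sube_ge0 ?(integrable_fin_num measurableT ihmCB) //.
have C_simplex := is_cexpK_simplex sigmaS S_meas Q_simplex cQC.
exact (le_integral_hphi_binned P B_disj B_cover B_borel S_meas phi_proper
  C_simplex cCmCB ihC ihmCB).
Qed.
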